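(* Let $R$ be a noetherian integral domain, $n\ge1$, $R[n]=R[t]/(t^n)$, and let $(x_1,\ldots,x_p)$ be a regular sequence in $R[n]$. Then the ideal $I$ of $R[n]$ generated by $x_1,\ldots,x_p$ is a balanced $R[n]$-module.
   Context: For an $R[n]$-module $M$ of finite type and $0\le i\le n$, let $M^{(i)}=\{m\in M: t^im=0\}$ (the second canonical filtration $0=M^{(0)}\subset M^{(1)}\subset\cdots\subset M^{(n)}=M$), and for $0<i\le n$ let $G^{(i)}(M)=M^{(i)}/M^{(i-1)}$, an $R$-module. For $1\le i\le n-1$, multiplication by $t$ induces an injective morphism of $R$-modules $\lambda_i:G^{(i+1)}(M)\to G^{(i)}(M)$. Set $\boldsymbol{\lambda}(M)=\lambda_1\circ\cdots\circ\lambda_{n-1}:G^{(n)}(M)\to G^{(1)}(M)$. $M$ is called balanced if $\boldsymbol{\lambda}(M)$ is surjective. *)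

From HB Require Import structures.
From mathcomp Require Import all_boot all_order all_algebra.
Set Implicit Arguments. Unset Strict Implicit. Unset Printing Implicit Defensive.
Import GRing.Theory.
Local Open Scope ring_scope.

Definition genI (A : comNzRingType) (s : seq A) (a : A) : Prop :=
  exists c : 'I_(size s) -> A, a = \sum_(i < size s) c i * s`_i.

Definition is_ideal (A : comNzRingType) (I : A -> Prop) : Prop :=
  [/\ I 0, (forall x y, I x -> I y -> I (x + y)) & (forall a x, I x -> I (a * x))].

Definition noetherian (A : comNzRingType) : Prop :=
  forall I : A -> Prop, is_ideal I -> exists s : seq A, forall a, I a <-> genI s a.

(* R[n] = R[t]/(t^n).  Elements of R[n] are represented by polynomials in  *)
(* {poly R}; an ideal J of R[n] is represented by its preimage in R[t],    *)
(* which contains t^n.                                                     *)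

Definition zeroRn (R : comNzRingType) (n : nat) (p : {poly R}) : Prop :=
  genI [:: 'X^n] p.

Definition idealRn (R : comNzRingType) (n : nat) (s : seq {poly R}) : {poly R} -> Prop :=
  genI ('X^n :: s).

Definition regular_seq_Rn (R : comNzRingType) (n : nat) (xs : seq {poly R}) : Prop :=
  (forall i : nat, (i < size xs)%N -> forall y : {poly R},
     idealRn n (take i xs) (xs`_i * y) -> idealRn n (take i xs) y)
  /\ ~ idealRn n xs 1.

(* Second canonical filtration of a submodule M of R[n] (M given by its
   preimage Mpre in R[t]): M^(i) = {m in M : t^i m = 0}. *)
Definition filtRn (R : comNzRingType) (n : nat) (Mpre : {poly R} -> Prop)
  (i : nat) (m : {poly R}) : Prop :=
  Mpre m /\ zeroRn n ('X^i * m).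

(* G^(i)(M) = M^(i)/M^(i-1): two representatives in M^(i) define the same
   element of G^(i)(M) iff their difference lies in M^(i-1). *)
Definition eqG (R : comNzRingType) (n : nat) (Mpre : {poly R} -> Prop)
  (i : nat) (m m' : {poly R}) : Prop :=
  filtRn n Mpre i.-1 (m - m').

(* lambda_i : G^(i+1)(M) -> G^(i)(M), induced by multiplication by t
   (on representatives). *)
Definition lambdaRn (R : comNzRingType) (m : {poly R}) : {poly R} := 'X * m.

(* boldlambda(M) = lambda_1 o ... o lambda_{n-1} : G^(n)(M) -> G^(1)(M),
   on representatives. *)
Definition blambdaRn (R : comNzRingType) (n : nat) (m : {poly R}) : {poly R} :=
  iter n.-1 (@lambdaRn R) m.

Definition balancedRn (R : comNzRingType) (n : nat) (Mpre : {poly R} -> Prop) : Prop :=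
  forall g : {poly R}, filtRn n Mpre 1 g ->
    exists m : {poly R}, filtRn n Mpre n m /\ eqG n Mpre 1 (blambdaRn n m) g.

(* For an ideal J of R[t] containing t^n, consider the condition that
   (J : t^k) is contained in J + (t^(n-k)) for every k <= n.  It holds for
   J = (t^n) because t is monic, and it survives adjoining to J an element x
   that is a non-zero-divisor modulo J: if t^k y = j + b x with j in J, then
   x t^(n-k) b lies in J, hence so does t^(n-k) b, so b = t^k w modulo J,
   and the condition for J applied to t^k (y - x w) = j + x (b - t^k w)
   finishes.  For the ideal
   I of a regular sequence this gives balancedness: an element of I killed by
   t is t^(n-1) c with t^(n-1) c in I, so c = m + t v with m in I, and then
   t^(n-1) m agrees with the given element up to t^n v. *)
From HB Require Import structures.
From mathcomp Require Import all_boot all_order all_algebra.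
From mathcomp Require Import ring.
Set Implicit Arguments. Unset Strict Implicit. Unset Printing Implicit Defensive.
Local Open Scope ring_scope.
Import GRing.Theory.

Section IdealOfSeq.
Variable A : comNzRingType.
Implicit Types (s : seq A) (a b x : A).

Lemma genI_natP s a :
  genI s a <-> exists c : nat -> A, a = \sum_(i < size s) c i * s`_i.
Proof.
split=> [[c ->]|[c ->]]; last by exists (fun i => c i).
exists (fun i => if insub i is Some j then c j else 0).
by apply: eq_bigr => i _; rewrite valK.
Qed.

Lemma genI0 s : genI s 0.
Proof. by exists (fun _ => 0); rewrite big1 // => i _; rewrite mul0r. Qed.

Lemma genID s a b : genI s a -> genI s b -> genI s (a + b).
Proof.
move=> [ca ->] [cb ->]; exists (fun i => ca i + cb i).
by rewrite -big_split; apply: eq_bigr => i _; rewrite mulrDl.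
Qed.

Lemma genIM s r a : genI s a -> genI s (r * a).
Proof.
move=> [c ->]; exists (fun i => r * c i).
by rewrite mulr_sumr; apply: eq_bigr => i _; rewrite mulrA.
Qed.

Lemma genIB s a b : genI s a -> genI s b -> genI s (a - b).
Proof. by move=> Ja Jb; apply: genID Ja _; rewrite -mulN1r; apply: genIM. Qed.

Lemma genI_ideal s : is_ideal (genI s).
Proof. by split; [apply: genI0 | apply: genID | apply: genIM]. Qed.

Lemma genI_nth s i : (i < size s)%N -> genI s s`_i.
Proof.
move=> lt_i_s; apply/genI_natP; exists (fun j => (j == i)%:R).
rewrite (bigD1 (Ordinal lt_i_s)) //= eqxx mul1r big1 ?addr0 // => j ne_ji.
suff /negbTE -> : val j != i by rewrite mul0r.
by apply: contra_neq ne_ji => eq_ji; apply: val_inj.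
Qed.

Lemma genI_rcons s x a :
  genI (rcons s x) a <-> exists j b, genI s j /\ a = j + b * x.
Proof.
have sum_rcons (c : nat -> A) : \sum_(i < size (rcons s x)) c i * (rcons s x)`_i
    = \sum_(i < size s) c i * s`_i + c (size s) * x.
  rewrite size_rcons big_ord_recr /= nth_rcons ltnn eqxx; congr (_ + _).
  by apply: eq_bigr => i _; rewrite nth_rcons ltn_ord.
split=> [/genI_natP[c ->]|[_ [b [/genI_natP[c ->] ->]]]].
  by rewrite sum_rcons; exists (\sum_(i < size s) c i * s`_i), (c (size s));
    split=> //; apply/genI_natP; exists c.
pose cx i := if i == size s then b else c i.
apply/genI_natP; exists cx; rewrite sum_rcons /cx eqxx; congr (_ + _).
by apply: eq_bigr => i _; rewrite ltn_eqF.
Qed.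

Lemma genI1 a b : genI [:: a] b <-> exists c, b = c * a.
Proof.
split; first by case=> c ->; exists (c ord0); rewrite big_ord1.
by case=> c ->; exists (fun _ => c); rewrite big_ord1.
Qed.

End IdealOfSeq.

Section TruncatedPolynomials.
Variables (R : comNzRingType) (n : nat).

Definition colonX_spec (J : {poly R} -> Prop) :=
  forall k y, (k <= n)%N -> J ('X^k * y) -> exists v, J (y - 'X^(n - k) * v).

Definition weakly_regular_seq_Rn (xs : seq {poly R}) :=
  forall i, (i < size xs)%N -> forall y,
    idealRn n (take i xs) (xs`_i * y) -> idealRn n (take i xs) y.

Lemma mulXnI k (p q : {poly R}) : 'X^k * p = 'X^k * q -> p = q.
Proof. exact: (monic_lreg (monicXn R k)). Qed.

Lemma colonX_spec_Xn : colonX_spec (genI [:: 'X^n]).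
Proof.
move=> k y le_kn /genI1[c Xky]; exists c.
suff -> : y = 'X^(n - k) * c by rewrite subrr; apply: genI0.
by apply: (@mulXnI k); rewrite Xky mulrA -exprD subnKC // mulrC.
Qed.

Lemma colonX_spec_rcons s x :
  genI s 'X^n -> (forall y, genI s (x * y) -> genI s y) ->
  colonX_spec (genI s) -> colonX_spec (genI (rcons s x)).
Proof.
move=> Xn_in_s x_reg colon_s k y le_kn /genI_rcons[j [z [Jj Xky]]].
have Jz : genI s ('X^(n - k) * z).
  apply: x_reg; have -> : x * ('X^(n - k) * z) = 'X^n * y - 'X^(n - k) * j.
    by rewrite -[in 'X^n](subnK le_kn) exprD -mulrA Xky; ring.
  by apply: genIB; rewrite ?[_ * y]mulrC; apply: genIM.
have [w Jzw] := colon_s (n - k)%N z (leq_subr _ _) Jz.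
rewrite subKn // in Jzw.
have Jy : genI s ('X^k * (y - x * w)).
  have -> : 'X^k * (y - x * w) = j + x * (z - 'X^k * w) by rewrite mulrBr Xky; ring.
  by apply: genID => //; apply: genIM.
have [v Jyv] := colon_s k _ le_kn Jy.
exists v; apply/genI_rcons; exists (y - x * w - 'X^(n - k) * v), w.
by split=> //; rewrite (mulrC w x) addrAC subrK.
Qed.

Lemma colonX_spec_weakly_regular xs :
  weakly_regular_seq_Rn xs -> colonX_spec (idealRn n xs).
Proof.
move=> xs_reg; rewrite -[xs]take_size.
elim: {-2}(size xs) (leqnn (size xs)) => [|i IHi] le_i_xs.
  by rewrite take0; apply: colonX_spec_Xn.
rewrite /idealRn (take_nth 0) // -rcons_cons; apply: colonX_spec_rcons.
- exact: (@genI_nth _ ('X^n :: _) 0).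
- exact: xs_reg.
- exact/IHi/ltnW.
Qed.

Lemma blambdaRnE (m : {poly R}) : blambdaRn n m = 'X^(n.-1) * m.
Proof.
rewrite /blambdaRn; elim: n.-1 => [|k IHk] /=; first by rewrite mul1r.
by rewrite IHk /lambdaRn exprS mulrA.
Qed.

Lemma balanced_colonX_spec J :
  (0 < n)%N -> is_ideal J -> J 'X^n -> colonX_spec J -> balancedRn n J.
Proof.
move=> n_gt0 idealJ J_Xn colonJ g [Jg /genI1[c Xg]].
have def_g : g = 'X^(n.-1) * c.
  by apply: (@mulXnI 1); rewrite expr1 Xg mulrA -exprS prednK // mulrC.
rewrite def_g in Jg; have [v Jcv] := colonJ n.-1 c (leq_pred n) Jg.
rewrite -subn1 subKn // expr1 in Jcv.
exists (c - 'X * v); split.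
  by split=> //; apply/genI1; exists (c - 'X * v); rewrite mulrC.
rewrite /eqG /filtRn; have -> : blambdaRn n (c - 'X * v) - g = - ('X^n * v).
  by rewrite blambdaRnE def_g mulrBr mulrA -exprSr prednK //; ring.
split; last by rewrite expr0 mul1r; apply/genI1; exists (- v); rewrite mulNr mulrC.
by case: idealJ => _ _ JM; rewrite mulrC -mulNr; apply: JM.
Qed.

End TruncatedPolynomials.

Theorem proposition3p7p2 (R : idomainType) (n : nat) (xs : seq {poly R}) :
  noetherian R -> (1 <= n)%N -> regular_seq_Rn n xs ->
  balancedRn n (idealRn n xs).
Proof.
move=> _ n_gt0 [xs_reg _]; apply: balanced_colonX_spec => //.
- exact: genI_ideal.
- exact: (@genI_nth _ ('X^n :: xs) 0).
- exact: colonX_spec_weakly_regular.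
Qed.
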